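(* For every $n\ge1$, $S_n(n)=\dfrac{(-1)^{n-1}}{3\cdot 2^n(n-1)!}$.
   Context: Let $a_0,a_1,\dots$ be indeterminates and $a(x)=\sum_{i\ge0}a_ix^i$. For a positive integer $j$ set $G(x)=\prod_{i=0}^{j-1}\frac{1+a(x)x^2}{1+ix}$, $H(x)=\prod_{i=1-j}^{-1}\frac{1+ix}{1+a(x)x^2}$ (formal power series in $x$), $u=2j-1$, $v=j(j-1)$. For each $n\ge1$ there are unique polynomials $S_0(n),\dots,S_n(n)\in\mathbb{Q}[a_0,\dots,a_{n-2}]$ (rational constants when $n=1$), independent of $j$, such that for every positive integer $j$ the coefficient of $x^{n-1}$ in $\frac{G(x)-H(x)}{x^2}(1+a(x)x^2)$ equals $u\big(a_{n-1}+S_0(n)+S_1(n)v+\cdots+S_n(n)v^n\big)$. *)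

From HB Require Import structures.
From mathcomp Require Import all_boot all_order all_algebra.
From mathcomp Require Import mpoly.
Set Implicit Arguments. Unset Strict Implicit. Unset Printing Implicit Defensive.
Import Order.TTheory GRing.Theory Num.Theory.
Local Open Scope ring_scope.

(* Formal power series in x over a commutative ring R, as coefficient
   sequences: f n = coefficient of x^n. *)
Definition fps (R : comPzRingType) := nat -> R.

Section FPS.
Variable R : comPzRingType.
Implicit Types f g h : fps R.

Definition fps_const (c : R) : fps R := fun n => if n == 0%N then c else 0.
Definition fps_one : fps R := fps_const 1.
Definition fps_x : fps R := fun n => if n == 1%N then 1 else 0.
Definition fps_add f g : fps R := fun n => f n + g n.
Definition fps_sub f g : fps R := fun n => f n - g n.
Definition fps_mul f g : fps R :=
  fun n => \sum_(i < n.+1) f i * g (n - i)%N.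
Definition fps_pow f (k : nat) : fps R := iter k (fps_mul f) fps_one.
(* Inverse of a series f with constant term f 0 = 1, via the (locally finite)
   geometric series  1/f = sum_k (1 - f)^k ; the coefficient of x^n only
   receives contributions from k <= n since (1 - f) has zero constant term. *)
Definition fps_inv f : fps R :=
  fun n => \sum_(k < n.+1) fps_pow (fps_sub fps_one f) k n.
Definition fps_div f g : fps R := fps_mul f (fps_inv g).
(* f / x^2, for a series f whose coefficients of x^0 and x^1 vanish *)
Definition fps_divx2 f : fps R := fun n => f n.+2.
Definition fps_prod (I : Type) (r : seq I) (F : I -> fps R) : fps R :=
  foldr (fun i acc => fps_mul (F i) acc) fps_one r.
End FPS.

(* Working ring for a given n = m.+1: Q[a_0, ..., a_m] = Q[a_0,...,a_{n-1}],
   the variable a_i being 'X_i.  The series a(x) = sum_i a_i x^i; the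
   coefficients a_i with i >= n do not influence the coefficient of x^{n-1}
   below, and are set to 0. *)
Definition aser (m : nat) : fps {mpoly rat[m.+1]} :=
  fun i => if (i < m.+1)%N then 'X_(inord i) else 0.

Section Series.
Variable m : nat.
Local Notation R := {mpoly rat[m.+1]}.

Definition one_ax2 : fps R :=
  fps_add (fps_one R) (fps_mul (aser m) (fps_mul (fps_x R) (fps_x R))).
Definition one_ix (i : int) : fps R :=
  fps_add (fps_one R) (fps_mul (fps_const (i%:~R : R)) (fps_x R)).

Definition Gser (j : nat) : fps R :=
  fps_prod [seq (i%:Z) | i <- iota 0 j] (fun i => fps_div one_ax2 (one_ix i)).
(* H(x) = prod_{i=1-j}^{-1} (1 + i x) / (1 + a(x) x^2);
   the integers i = 1-j, ..., -1 are listed as i = - k, k = 1, ..., j-1 *)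
Definition Hser (j : nat) : fps R :=
  fps_prod [seq (- (k%:Z)) | k <- iota 1 j.-1] (fun i => fps_div (one_ix i) one_ax2).

Definition GHser (j : nat) : fps R :=
  fps_mul (fps_divx2 (fps_sub (Gser j) (Hser j))) one_ax2.
End Series.

(* Write F_j = (1 + a x^2) / (1 + j x) and K_j = (1 - j x) / (1 + a x^2), so that
   G_{j+1} = G_j F_j and H_{j+1} = H_j K_j for j >= 1.  As functions of j, the
   coefficient [x^N] F_j is a polynomial of degree N with leading coefficient (-1)^N,
   [x^N] K_j has degree at most 1, and F_j and K_j agree up to order x.  Expanding the
   products, [x^N] H_j and [x^N] (G_j - H_j) satisfy first-order difference equations in
   j whose increments have known degree and leading coefficient, so discrete
   integration shows that [x^N] H_j has degree 2N with leading coefficient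
   (-1)^N / (2^N N!), and [x^(N+2)] (G_j - H_j) degree 2N + 3 with a third of that
   leading coefficient.  Both sides of the defining identity are thus polynomials in j
   of degree 2n + 1, and comparing leading coefficients gives
   2 S_n(n) = (-1)^(n-1) / (3 2^(n-1) (n-1)!). *)

From HB Require Import structures.
From mathcomp Require Import all_boot all_order all_algebra.
From mathcomp Require Import mpoly.
From mathcomp Require Import ring zify.
From Stdlib Require Import FunctionalExtensionality.
Import Order.TTheory GRing.Theory Num.Theory.
Local Open Scope ring_scope.
Set Implicit Arguments. Unset Strict Implicit. Unset Printing Implicit Defensive.

Section PolynomialFunctions.
Variable R : idomainType.
Implicit Types (f g : nat -> R) (p q : {poly R}) (a c : R) (d e : nat).

(* With [c = 0], [polyfun f d c] says that [f] has degree less than [d]. *)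
Definition polyfun f d c : Prop :=
  exists2 p : {poly R}, (size p <= d.+1)%N /\ p`_d = c
                      & forall j, (0 < j)%N -> f j = p.[j%:R].

Lemma polyfun_ext f g d c :
  (forall j, (0 < j)%N -> f j = g j) -> polyfun f d c -> polyfun g d c.
Proof. by move=> fg [p p_d f_p]; exists p => // j j_gt0; rewrite -fg ?f_p. Qed.

Lemma polyfun0 d : polyfun (fun=> 0) d 0.
Proof. by exists 0; rewrite ?size_poly0 ?coef0 // => j _; rewrite horner0. Qed.

Lemma polyfun_const a : polyfun (fun=> a) 0 a.
Proof.
by exists a%:P; rewrite ?size_polyC_leq1 ?coefC // => j _; rewrite hornerC.
Qed.

Lemma polyfun_nat : polyfun (fun j => j%:R) 1 1.
Proof. by exists 'X; rewrite ?size_polyX ?coefX // => j _; rewrite hornerX. Qed.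

Lemma polyfun_widen f d c e : polyfun f d c -> (d < e)%N -> polyfun f e 0.
Proof.
move=> [p [p_d _] f_p] lt_de; have p_e : (size p <= e)%N by rewrite (leq_trans p_d).
by exists p; rewrite ?(leq_trans p_e) ?(leq_sizeP _ _ p_e).
Qed.

Lemma polyfun_add f g d c1 c2 :
  polyfun f d c1 -> polyfun g d c2 -> polyfun (fun j => f j + g j) d (c1 + c2).
Proof.
move=> [p [p_d p_c] f_p] [q [q_d q_c] g_q]; exists (p + q).
  by rewrite (leq_trans (size_polyD _ _)) ?geq_max ?p_d ?q_d ?coefD ?p_c ?q_c.
by move=> j j_gt0; rewrite hornerD f_p ?g_q.
Qed.

Lemma polyfun_opp f d c : polyfun f d c -> polyfun (fun j => - f j) d (- c).
Proof.
move=> [p [p_d p_c] f_p]; exists (- p); first by rewrite size_polyN coefN p_c.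
by move=> j j_gt0; rewrite hornerN f_p.
Qed.

Lemma coefM_sizes p q d e : (size p <= d.+1)%N -> (size q <= e.+1)%N ->
  (p * q)`_(d + e) = p`_d * q`_e.
Proof.
move=> p_d q_e; rewrite coefM (bigD1 (@Ordinal (d + e).+1 d (leq_addr e d))) //= addKn.
rewrite big1 ?addr0 // => i /eqP ne_id; have [lt_id | le_di] := ltnP i d.
  by rewrite [q`__](leq_sizeP _ _ q_e) ?mulr0 //; lia.
rewrite [p`__](leq_sizeP _ _ p_d) ?mul0r // ltn_neqAle le_di andbT.
by apply/eqP => di; apply: ne_id; exact: val_inj.
Qed.

Lemma polyfun_mul f g d e c1 c2 :
  polyfun f d c1 -> polyfun g e c2 -> polyfun (fun j => f j * g j) (d + e) (c1 * c2).
Proof.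
move=> [p [p_d p_c] f_p] [q [q_e q_c] g_q]; exists (p * q).
  by rewrite coefM_sizes // p_c q_c (leq_trans (size_polyMleq _ _)) //; lia.
by move=> j j_gt0; rewrite hornerM f_p ?g_q.
Qed.

Lemma polyfun_mull a f d c : polyfun f d c -> polyfun (fun j => a * f j) d (a * c).
Proof. exact: polyfun_mul (polyfun_const a). Qed.

Lemma polyfun_exp f d c n :
  polyfun f d c -> polyfun (fun j => f j ^+ n) (d * n) (c ^+ n).
Proof.
move=> f_d; elim: n => [|n IHn].
  by rewrite muln0 expr0; apply: polyfun_ext (polyfun_const 1) => j _; rewrite expr0.
by rewrite mulnS exprS; apply: polyfun_ext (polyfun_mul f_d IHn) => j _; rewrite exprS.
Qed.

Lemma polyfun_sum n (t : nat -> nat -> R) d (c : nat -> R) :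
  (forall i, (i < n)%N -> polyfun (t i) d (c i)) ->
  polyfun (fun j => \sum_(i < n) t i j) d (\sum_(i < n) c i).
Proof.
elim: n => [|n IHn] t_d.
  by rewrite big_ord0; apply: polyfun_ext (polyfun0 d) => j _; rewrite big_ord0.
rewrite big_ord_recr; apply: polyfun_ext (polyfun_add (IHn _) (t_d n _)) => //.
- by move=> j _; rewrite big_ord_recr.
- by move=> i lt_in; apply: t_d; rewrite ltnW.
Qed.

Lemma polyfun_sum_recr n (t : nat -> nat -> R) d c :
  (forall i, (i < n)%N -> polyfun (t i) d 0) -> polyfun (t n) d c ->
  polyfun (fun j => \sum_(i < n.+1) t i j) d c.
Proof.
move=> t_d tn_d; have := polyfun_add (polyfun_sum t_d) tn_d.
rewrite big1 // add0r; apply: polyfun_ext => j _; exact/esym/big_ord_recr.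
Qed.

Lemma size_coef_diffXn n :
  let s : {poly R} := ('X + 1) ^+ n.+1 - 'X ^+ n.+1 in
  (size s <= n.+1)%N /\ s`_n = n.+1%:R.
Proof.
elim: n => [|n [s_n s_c]] /=.
  by rewrite !expr1 addrC addKr size_polyC coefC leq_b1.
set s := _ - _ in s_n s_c.
have -> : ('X + 1 : {poly R}) ^+ n.+2 - 'X ^+ n.+2 = ('X + 1) * s + 'X ^+ n.+1.
  by rewrite /s !(exprS _ n.+1); ring.
have sX1 : (size (('X + 1)%R : {poly R}) <= 2)%N.
  by rewrite (leq_trans (size_polyD _ _)) // size_polyX geq_max (leq_trans (size_polyC_leq1 _)).
split.
  rewrite (leq_trans (size_polyD _ _)) // geq_max size_polyXn leqnn andbT.
  by rewrite (leq_trans (size_polyMleq _ _)) // -subn1 leq_subLR (leq_trans (leq_add sX1 s_n)).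
rewrite coefD mulrDl mul1r coefD coefXM s_c coefXn eqxx [s`__](leq_sizeP _ _ s_n) //.
by rewrite addr0 -natrD addn1.
Qed.

Hypothesis natr_unit : forall n, n.+1%:R \is a @GRing.unit R.

Lemma natr_inj : injective (fun n : nat => n%:R : R).
Proof.
have natr_neq k l : (k < l)%N -> k%:R != l%:R :> R.
  move=> /subnKC <-; rewrite addSnnS natrD -subr_eq0 opprD addrA subrr add0r oppr_eq0.
  by apply/eqP => eq0; move: (natr_unit (l - k.+1)); rewrite eq0 unitr0.
by move=> k l /= eq_kl; have [/natr_neq|/natr_neq|] := ltngtP k l; rewrite ?eq_kl ?eqxx.
Qed.

Lemma poly_antidiff d p : (size p <= d)%N ->
  exists2 q : {poly R}, (size q <= d.+1)%N /\ d%:R * q`_d = p`_d.-1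
                      & forall x, q.[x + 1] - q.[x] = p.[x].
Proof.
elim: d p => [|d IHd] p p_d.
  exists 0; first by rewrite size_poly0 coef0 mul0r (size_poly_leq0P _ p_d) coef0.
  by move=> x; rewrite (size_poly_leq0P _ p_d) !horner0 subrr.
pose c := (d.+1%:R)^-1 * p`_d.
have [s_d s_c] := size_coef_diffXn d; set s := _ - _ in s_d s_c.
have r_d : (size (p - c *: s)%R <= d)%N.
  have r_d1 : (size (p - c *: s)%R <= d.+1)%N.
    rewrite (leq_trans (size_polyD _ _)) // geq_max p_d size_polyN.
    exact: leq_trans (size_scale_leq _ _) _.
  apply/leq_sizeP => i; rewrite leq_eqVlt => /predU1P [<-|]; last exact: leq_sizeP.
  by rewrite coefB coefZ s_c mulrC mulrA mulrV ?natr_unit // mul1r subrr.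
have [q [q_d q_c] q_diff] := IHd _ r_d.
exists (c *: 'X^(d.+1) + q).
  split; last first.
    rewrite coefD coefZ coefXn eqxx mulr1 [q`__](leq_sizeP _ _ q_d) // addr0.
    by rewrite mulrA mulrV ?natr_unit // mul1r.
  rewrite (leq_trans (size_polyD _ _)) // geq_max (leq_trans (size_scale_leq _ _)).
    exact: leqW.
  by rewrite size_polyXn.
move=> x; rewrite !hornerD; move/eqP: (q_diff x); rewrite subr_eq => /eqP ->.
by rewrite /s !(hornerD, hornerN, hornerZ, hornerXn, horner_exp, hornerX, hornerC); ring.
Qed.

Lemma polyfun_antidiff f g d c :
  (forall j, (0 < j)%N -> f j.+1 = f j + g j) ->
  polyfun g d (d.+1%:R * c) -> polyfun f d.+1 c.
Proof.
move=> f_diff [p [p_d p_c] g_p]; have [q [q_d q_c] q_diff] := poly_antidiff p_d.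
exists (q + (f 1 - q.[1])%:P).
  rewrite (leq_trans (size_polyD _ _)) ?geq_max ?q_d ?(leq_trans (size_polyC_leq1 _)) //.
  by split=> //; rewrite coefD coefC addr0; apply: (mulrI (natr_unit d)); rewrite q_c p_c.
elim=> // -[_|j IHj _]; rewrite hornerD hornerC; first by rewrite addrC subrK.
by rewrite f_diff // IHj // g_p // -q_diff natr1 hornerD hornerC; ring.
Qed.

Lemma polyfun_uniq f d c1 c2 : polyfun f d c1 -> polyfun f d c2 -> c1 = c2.
Proof.
move=> [p [_ <-] f_p] [q [_ <-] f_q].
suff /eqP : p - q = 0 by rewrite subr_eq0 => /eqP ->.
apply: (@roots_geq_poly_eq0 _ _ [seq i.+1%:R | i <- iota 0 (size (p - q))]).
- by apply/allP => _ /mapP [i _ ->]; rewrite rootE !hornerE -f_p // -f_q // subrr.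
- by rewrite map_inj_uniq ?iota_uniq // => i k /natr_inj [].
- by rewrite size_map size_iota.
Qed.

End PolynomialFunctions.

Arguments polyfun0 {R}.
Arguments polyfun_nat {R}.

Section FormalPowerSeries.
Variable R : comNzRingType.
Implicit Types (f g h : fps R) (p q : {poly R}) (a b : R).

Definition fps_trunc n f : {poly R} := \poly_(i < n.+1) f i.

Lemma coef_fps_mul_trunc f g n i :
  (i <= n)%N -> fps_mul f g i = (fps_trunc n f * fps_trunc n g)`_i.
Proof.
move=> le_in; rewrite coefM; apply: eq_bigr => l _; rewrite !coef_poly.
by have := ltn_ord l; rewrite !ltnS (leq_trans (leq_subr _ _) le_in) => /leq_trans->.
Qed.

Lemma coefMl_eq p1 p2 q n :
  (forall i, (i <= n)%N -> p1`_i = p2`_i) -> (p1 * q)`_n = (p2 * q)`_n.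
Proof. by move=> p12; rewrite !coefM; apply: eq_bigr => i _; rewrite p12 // -ltnS. Qed.

Lemma fps_mulC f g : fps_mul f g = fps_mul g f.
Proof.
apply: functional_extensionality => n.
by rewrite !(coef_fps_mul_trunc _ _ (leqnn n)) mulrC.
Qed.

Lemma fps_mulA f g h : fps_mul (fps_mul f g) h = fps_mul f (fps_mul g h).
Proof.
apply: functional_extensionality => n.
have trunc_mul u v : forall i, (i <= n)%N ->
    (fps_trunc n (fps_mul u v))`_i = (fps_trunc n u * fps_trunc n v)`_i.
  by move=> i le_in; rewrite coef_poly ltnS le_in -coef_fps_mul_trunc.
rewrite !(coef_fps_mul_trunc _ _ (leqnn n)) (coefMl_eq _ (trunc_mul f g)).
by rewrite [in RHS]mulrC (coefMl_eq _ (trunc_mul g h)) [in RHS]mulrC mulrA.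
Qed.

Lemma fps_mul1l f : fps_mul (fps_one R) f = f.
Proof.
apply: functional_extensionality => n.
rewrite /fps_mul big_ord_recl /fps_one /fps_const /= mul1r subn0 big1 ?addr0 //.
by move=> i _; rewrite mul0r.
Qed.

Lemma fps_mul1r f : fps_mul f (fps_one R) = f.
Proof. by rewrite fps_mulC fps_mul1l. Qed.

Lemma fps_mulDl f g h : fps_mul (fps_add f g) h = fps_add (fps_mul f h) (fps_mul g h).
Proof.
apply: functional_extensionality => n.
by rewrite /fps_add /fps_mul -big_split; apply: eq_bigr => i _; rewrite mulrDl.
Qed.

Lemma fps_prod_rcons (I : Type) (r : seq I) i (F : I -> fps R) :
  fps_prod (rcons r i) F = fps_mul (fps_prod r F) (F i).
Proof.
elim: r => [|k r IHr] /=; first by rewrite fps_mul1r fps_mul1l.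
by rewrite IHr fps_mulA.
Qed.

Lemma coef_fps_mul_const a f n : fps_mul (fps_const a) f n = a * f n.
Proof.
rewrite /fps_mul big_ord_recl subn0 big1 ?addr0 // => i _.
by rewrite /fps_const /= mul0r.
Qed.

Lemma coef_fps_mul_x f n : fps_mul (fps_x R) f n = if n is n'.+1 then f n' else 0.
Proof.
rewrite /fps_mul; case: n => [|n]; first by rewrite big_ord1 mul0r.
rewrite big_ord_recl big_ord_recl /= mul0r mul1r add0r subn1 big1 ?addr0 //.
by move=> i _; rewrite mul0r.
Qed.

Lemma coef_fps_mul_cx a f n :
  fps_mul (fps_mul (fps_const a) (fps_x R)) f n = if n is n'.+1 then a * f n' else 0.
Proof.
by rewrite fps_mulA coef_fps_mul_const coef_fps_mul_x; case: n => [|n]; rewrite ?mulr0.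
Qed.

Lemma coef_fps_mul_1addCX b f n :
  fps_mul (fps_add (fps_one R) (fps_mul (fps_const b) (fps_x R))) f n =
  f n + (if n is n'.+1 then b * f n' else 0).
Proof. by rewrite fps_mulDl /fps_add fps_mul1l coef_fps_mul_cx. Qed.

Lemma coef_fps_pow_cx a k n :
  fps_pow (fps_mul (fps_const a) (fps_x R)) k n = if n == k then a ^+ k else 0.
Proof.
elim: k n => [|k IHk] n; first by rewrite /fps_pow /= /fps_one /fps_const expr0.
rewrite /fps_pow iterS -/(fps_pow _ k) coef_fps_mul_cx.
by case: n => [|n] //; rewrite IHk eqSS; case: eqP; rewrite ?exprS ?mulr0.
Qed.

Lemma coef_fps_inv_1addCX b n :
  fps_inv (fps_add (fps_one R) (fps_mul (fps_const b) (fps_x R))) n = (- b) ^+ n.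
Proof.
rewrite /fps_inv.
have -> : fps_sub (fps_one R) (fps_add (fps_one R) (fps_mul (fps_const b) (fps_x R))) =
          fps_mul (fps_const (- b)) (fps_x R).
  apply: functional_extensionality => l.
  by rewrite /fps_sub /fps_add !coef_fps_mul_const opprD addNKr mulNr.
rewrite big_ord_recr /= coef_fps_pow_cx eqxx big1 ?add0r // => i _.
by rewrite coef_fps_pow_cx eqn_leq leqNgt ltn_ord.
Qed.

End FormalPowerSeries.

Section ProductCoefficients.
Variable R : idomainType.
Hypothesis natr_unit : forall n, n.+1%:R \is a @GRing.unit R.

Lemma coef0_fps_prod_rec (X Y : nat -> fps R) :
  (forall j, (0 < j)%N -> X j.+1 = fps_mul (X j) (Y j)) ->
  (forall j, (0 < j)%N -> Y j 0%N = 1) -> X 1%N 0%N = 1 ->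
  forall j, (0 < j)%N -> X j 0%N = 1.
Proof.
move=> X_rec Y_0 X1_0; elim=> // -[_|j IHj _] //.
by rewrite X_rec // /fps_mul big_ord1 subn0 IHj // Y_0 // mulr1.
Qed.

Lemma polyfun_coef_fps_prod_rec (X Y : nat -> fps R) (c : nat -> R) :
  (forall j, (0 < j)%N -> X j.+1 = fps_mul (X j) (Y j)) ->
  (forall j, (0 < j)%N -> Y j 0%N = 1) -> X 1%N 0%N = 1 ->
  (forall n, exists b, polyfun (Y^~ n) n b) -> polyfun (Y^~ 1%N) 1 (-1) ->
  c 0%N = 1 -> (forall N, N.*2.+2%:R * c N.+1 = - c N) ->
  forall N, polyfun (X^~ N) N.*2 (c N).
Proof.
move=> X_rec Y_0 X1_0 Y_deg Y_1 c_0 c_rec; elim/ltn_ind; case=> [_|N IH]; rewrite ?doubleS.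
  rewrite c_0; apply: polyfun_ext (polyfun_const 1) => j j_gt0.
  by rewrite (coef0_fps_prod_rec X_rec Y_0 X1_0).
apply: (polyfun_antidiff natr_unit (g := fun j => \sum_(l < N.+1) X j l * Y j (N.+1 - l)%N)).
  by move=> j j_gt0; rewrite X_rec // /fps_mul big_ord_recr /= subnn Y_0 // mulr1 addrC.
rewrite c_rec -mulrN1.
apply: (polyfun_sum_recr (t := fun l j => X j l * Y j (N.+1 - l)%N)) => [l lt_lN|].
  have [b Y_b] := Y_deg (N.+1 - l)%N.
  by apply: polyfun_widen (polyfun_mul (IH l (ltnW lt_lN)) Y_b) _; rewrite -!mul2n; lia.
by rewrite subSnn -[N.*2.+1]addn1; apply: polyfun_mul (IH N (ltnSn N)) Y_1.
Qed.

Section ProductDifference.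
Variables G H F K : nat -> fps R.
Hypothesis G_rec : forall j, (0 < j)%N -> G j.+1 = fps_mul (G j) (F j).
Hypothesis H_rec : forall j, (0 < j)%N -> H j.+1 = fps_mul (H j) (K j).
Hypotheses (F_0 : forall j, (0 < j)%N -> F j 0%N = 1)
           (K_0 : forall j, (0 < j)%N -> K j 0%N = 1).
Hypotheses (G_0 : forall j, (0 < j)%N -> G j 0%N = 1)
           (H_0 : forall j, (0 < j)%N -> H j 0%N = 1).
Hypothesis FK_1 : forall j, (0 < j)%N -> F j 1%N = K j 1%N.
Hypothesis F_deg : forall n, polyfun (F^~ n) n ((-1) ^+ n).
Hypothesis FK_deg : forall n, (1 < n)%N -> polyfun (fun j => F j n - K j n) n ((-1) ^+ n).
Variables c e : nat -> R.
Hypothesis H_deg : forall N, polyfun (H^~ N) N.*2 (c N).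
Hypotheses (e_1 : e 1%N = 0) (e_rec : forall N, N.*2.+3%:R * e N.+2 = c N - e N.+1).

Let D j n := G j n - H j n.

Lemma coef_fps_prod_sub_rec j n : (0 < j)%N ->
  D j.+1 n = D j n + (\sum_(i < n) D j i * F j (n - i)%N
                      + \sum_(i < n) H j i * (F j (n - i)%N - K j (n - i)%N)).
Proof.
move=> j_gt0; rewrite /D G_rec // H_rec // /fps_mul !big_ord_recr /= subnn F_0 // K_0 //.
rewrite !mulr1; set t := \sum_(i < n) H j i * K j _.
suff -> : \sum_(i < n) G j i * F j (n - i)%N = \sum_(i < n) (G j i - H j i) * F j (n - i)%N
    + \sum_(i < n) H j i * (F j (n - i)%N - K j (n - i)%N) + t by ring.
by rewrite /t -!big_split; apply: eq_bigr => i _ /=; ring.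
Qed.

Lemma polyfun_coef_fps_prod_sub N : polyfun (D^~ N.+1) N.*2.+1 (e N.+1).
Proof.
elim/ltn_ind: N; case=> [_|N IH]; rewrite ?doubleS.
  apply: (polyfun_antidiff natr_unit (g := fun=> 0)); last by rewrite e_1 mulr0; exact: polyfun0.
  move=> j j_gt0; rewrite coef_fps_prod_sub_rec // !big_ord1 subn0 FK_1 // subrr mulr0.
  by rewrite /D G_0 // H_0 // subrr mul0r !addr0.
apply: (polyfun_antidiff natr_unit); first by move=> j j_gt0; exact: coef_fps_prod_sub_rec.
rewrite e_rec addrC; apply: polyfun_add.
  apply: (polyfun_sum_recr (t := fun i j => D j i * F j (N.+2 - i)%N)) => [[|i] lt_iN|].
  - by apply: polyfun_ext (polyfun0 _) => j j_gt0; rewrite /D G_0 // H_0 // subrr mul0r.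
  - by apply: polyfun_widen (polyfun_mul (IH i (ltnW lt_iN)) (F_deg _)) _; rewrite -!mul2n; lia.
  - have := polyfun_mul (IH N (ltnSn N)) (F_deg 1).
    by rewrite subSnn expr1 mulrN1 addn1.
have FK_N2 : polyfun (fun j => H j N.+1 * (F j 1%N - K j 1%N)) N.*2.+2 0.
  by apply: polyfun_ext (polyfun0 _) => j j_gt0; rewrite FK_1 // subrr mulr0.
have FK_sum : polyfun (fun j => \sum_(i < N.+1) H j i * (F j (N.+2 - i)%N - K j (N.+2 - i)%N))
                      N.*2.+2 (c N).
  apply: (polyfun_sum_recr (t := fun i j => H j i * (F j (N.+2 - i)%N - K j (N.+2 - i)%N))).
    move=> i lt_iN; apply: polyfun_widen (polyfun_mul (H_deg i) (FK_deg _)) _.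
    - by lia.
    - by rewrite -!mul2n; lia.
  have -> : (N.+2 - N = 2)%N by lia.
  by have := polyfun_mul (H_deg N) (FK_deg (isT : 1 < 2)%N); rewrite expr2 mulrNN !mulr1 addn2.
have := polyfun_add FK_sum FK_N2; rewrite addr0.
by apply: polyfun_ext => j _; rewrite [in RHS]big_ord_recr /= subSnn.
Qed.

End ProductDifference.
End ProductCoefficients.

Lemma mpoly_natr_unit k n : n.+1%:R \is a @GRing.unit {mpoly rat[k]}.
Proof. by rewrite -mpolyC_nat rmorph_unit // unitfE pnatr_eq0. Qed.

Section SeriesFactors.
Variable m : nat.
Local Notation R := {mpoly rat[m.+1]}.

Definition Gfactor (j : nat) : fps R := fps_div (one_ax2 m) (one_ix m j%:Z).
Definition Hfactor (j : nat) : fps R := fps_div (one_ix m (- j%:Z)) (one_ax2 m).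
Definition inv_one_ax2 : fps R := fps_inv (one_ax2 m).

Lemma Gser_S j : Gser m j.+1 = fps_mul (Gser m j) (Gfactor j).
Proof. by rewrite /Gser -[j.+1]addn1 iotaD cats1 map_rcons fps_prod_rcons. Qed.

Lemma Hser_S j : (0 < j)%N -> Hser m j.+1 = fps_mul (Hser m j) (Hfactor j).
Proof.
case: j => // j _; rewrite /Hser; have -> : j.+2.-1 = (j + 1)%N by rewrite addn1.
by rewrite iotaD cats1 map_rcons fps_prod_rcons.
Qed.

Lemma one_ax2_0 : one_ax2 m 0%N = 1.
Proof.
rewrite /one_ax2 /fps_add fps_mulC fps_mulA coef_fps_mul_x.
by rewrite /fps_one /fps_const addr0.
Qed.

Lemma one_ax2_1 : one_ax2 m 1%N = 0.
Proof.
rewrite /one_ax2 /fps_add fps_mulC fps_mulA !coef_fps_mul_x.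
by rewrite /fps_one /fps_const addr0.
Qed.

Lemma inv_one_ax2_0 : inv_one_ax2 0%N = 1.
Proof. by rewrite /inv_one_ax2 /fps_inv big_ord1. Qed.

Lemma inv_one_ax2_1 : inv_one_ax2 1%N = 0.
Proof.
rewrite /inv_one_ax2 /fps_inv big_ord_recr big_ord1 /= fps_mul1r /fps_sub one_ax2_1.
by rewrite /fps_one /fps_const /= subr0 addr0.
Qed.

Lemma coef_Gfactor j n :
  Gfactor j n = \sum_(l < n.+1) one_ax2 m l * (- j%:R) ^+ (n - l).
Proof.
by apply: eq_bigr => l _; rewrite /one_ix coef_fps_inv_1addCX.
Qed.

Lemma coef_Hfactor j n :
  Hfactor j n = inv_one_ax2 n + (if n is n'.+1 then - j%:R * inv_one_ax2 n' else 0).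
Proof. by rewrite /Hfactor /fps_div /one_ix coef_fps_mul_1addCX mulrNz. Qed.

Lemma Gfactor_0 j : Gfactor j 0%N = 1.
Proof. by rewrite coef_Gfactor big_ord1 one_ax2_0 mul1r expr0. Qed.

Lemma Hfactor_0 j : Hfactor j 0%N = 1.
Proof. by rewrite coef_Hfactor inv_one_ax2_0 addr0. Qed.

Lemma Gfactor_Hfactor_1 j : Gfactor j 1%N = Hfactor j 1%N.
Proof.
rewrite coef_Gfactor coef_Hfactor big_ord_recr big_ord1 /= one_ax2_0 one_ax2_1.
by rewrite inv_one_ax2_0 inv_one_ax2_1 mul1r mul0r addr0 add0r mulr1 expr1.
Qed.

Lemma polyfun_Gfactor n : polyfun (Gfactor^~ n) n ((-1) ^+ n).
Proof.
have neg_j_pow k : polyfun (fun j => (- (j%:R : R)) ^+ k) k ((-1) ^+ k).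
  by have := polyfun_exp k (polyfun_opp polyfun_nat); rewrite mul1n.
apply: (@polyfun_ext _ (fun j => \sum_(l < n.+1) one_ax2 m (n - l)%N * (- j%:R) ^+ l)).
  move=> j _; rewrite coef_Gfactor (reindex_inj rev_ord_inj).
  by apply: eq_bigr => l _ /=; rewrite subSS subKn // -ltnS.
apply: (polyfun_sum_recr (t := fun l j => one_ax2 m (n - l)%N * (- j%:R) ^+ l)).
  by move=> l lt_ln; apply: polyfun_widen (polyfun_mull _ (neg_j_pow l)) lt_ln.
by have := polyfun_mull 1 (neg_j_pow n); rewrite subnn one_ax2_0 mul1r.
Qed.

Lemma polyfun_Hfactor_S n : polyfun (Hfactor^~ n.+1) 1 (- inv_one_ax2 n).
Proof.
have := polyfun_add (polyfun_widen (polyfun_const (inv_one_ax2 n.+1)) (ltn0Sn 0))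
                    (polyfun_mull (- inv_one_ax2 n) polyfun_nat).
rewrite add0r mulr1; apply: polyfun_ext => j _.
by rewrite coef_Hfactor !mulNr mulrC.
Qed.

Lemma polyfun_Hfactor n : exists b, polyfun (Hfactor^~ n) n b.
Proof.
case: n => [|[|n]].
- by exists 1; apply: polyfun_ext (polyfun_const 1) => j _; rewrite Hfactor_0.
- by eexists; exact: polyfun_Hfactor_S.
- by exists 0; exact: polyfun_widen (polyfun_Hfactor_S n.+1) _.
Qed.

Lemma polyfun_Gfactor_sub_Hfactor n : (1 < n)%N ->
  polyfun (fun j => Gfactor j n - Hfactor j n) n ((-1) ^+ n).
Proof.
case: n => [|[|n]] // _; rewrite -[X in polyfun _ _ X]subr0.
exact: polyfun_add (polyfun_Gfactor _) (polyfun_opp (polyfun_widen (polyfun_Hfactor_S n.+1) _)).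
Qed.

End SeriesFactors.

Lemma polyfun_uv_expansion (R : idomainType) n (x : R) (s : nat -> R) :
  polyfun (fun j => ((2 * j - 1)%N)%:R *
                    (x + \sum_(k < n.+2) s k * ((j * (j - 1))%N)%:R ^+ k))
          n.*2.+3 (2 * s n.+1).
Proof.
have const1_1 : polyfun (fun=> 1 : R) 1 0 := polyfun_widen (polyfun_const 1) (ltn0Sn 0).
have u_deg : polyfun (fun j => ((2 * j - 1)%N)%:R : R) 1 2.
  have := polyfun_add (polyfun_mull 2 polyfun_nat) (polyfun_opp const1_1).
  rewrite mulr1 subr0; apply: polyfun_ext => j j_gt0.
  by rewrite natrB ?natrM ?muln_gt0 //; lia.
have v_deg : polyfun (fun j => ((j * (j - 1))%N)%:R : R) 2 1.
  have := polyfun_mul polyfun_nat (polyfun_add polyfun_nat (polyfun_opp const1_1)).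
  by rewrite subr0 mulr1; apply: polyfun_ext => j j_gt0; rewrite natrM natrB.
have sum_deg : polyfun (fun j => x + \sum_(k < n.+2) s k * ((j * (j - 1))%N)%:R ^+ k)
                       n.*2.+2 (s n.+1).
  rewrite -[s n.+1]add0r; apply: polyfun_add.
    exact: polyfun_widen (polyfun_const x) (ltn0Sn _).
  apply: (polyfun_sum_recr (t := fun k j => s k * ((j * (j - 1))%N)%:R ^+ k)).
    move=> k lt_kn; apply: polyfun_widen (polyfun_mull _ (polyfun_exp k v_deg)) _.
    by rewrite -mul2n; lia.
  by have := polyfun_mull (s n.+1) (polyfun_exp n.+1 v_deg); rewrite expr1n mulr1 mul2n.
by have := polyfun_mul u_deg sum_deg; rewrite add1n.
Qed.

(* [lead_prod N] is the coefficient of j^(2N) in [x^N] H_j, and [lead_diff N] that of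
   j^(2N-1) in [x^N] (G_j - H_j). *)
Definition lead_prod N : rat := (-1) ^+ N / (2 ^+ N * N`!%:R).
Definition lead_diff N : rat := if N is N'.+2 then lead_prod N' / 3 else 0.

Lemma lead_prod_rec N : N.*2.+2%:R * lead_prod N.+1 = - lead_prod N.
Proof.
rewrite /lead_prod -doubleS -mul2n natrM factS natrM !exprS.
have fact_neq0 : (N`!%:R : rat) != 0 by rewrite pnatr_eq0 -lt0n fact_gt0.
by field; rewrite fact_neq0 expf_neq0 // addrC natr1 pnatr_eq0.
Qed.

Lemma lead_diff_rec N : N.*2.+3%:R * lead_diff N.+2 = lead_prod N - lead_diff N.+1.
Proof.
case: N => [|N] /=; first by rewrite subr0 mulrC divfK.
by rewrite -[lead_prod N]opprK -lead_prod_rec doubleS !mulrS -mul2n natrM; field.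
Qed.

Section Proposition.
Variable m : nat.
Local Notation R := {mpoly rat[m.+1]}.

Lemma polyfun_coef_Hser N : polyfun (fun j => Hser m j N) N.*2 (lead_prod N)%:MP.
Proof.
apply: (polyfun_coef_fps_prod_rec (@mpoly_natr_unit _) (@Hser_S m) (fun j _ => Hfactor_0 m j)
         (c := fun N => (lead_prod N)%:MP)) => //.
- exact: polyfun_Hfactor.
- by have := polyfun_Hfactor_S m 0; rewrite inv_one_ax2_0.
- by move=> n; rewrite -mpolyC_nat -mpolyCM lead_prod_rec mpolyCN.
Qed.

Lemma polyfun_coef_GHdiff N :
  polyfun (fun j => Gser m j N.+1 - Hser m j N.+1) N.*2.+1 (lead_diff N.+1)%:MP.
Proof.
have G1_0 : Gser m 1 0%N = 1 by rewrite Gser_S fps_mul1l Gfactor_0.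
have G_0 := coef0_fps_prod_rec (fun j _ => Gser_S m j) (fun j _ => Gfactor_0 m j) G1_0.
have H_0 := coef0_fps_prod_rec (@Hser_S m) (fun j _ => Hfactor_0 m j) (erefl _).
apply: (polyfun_coef_fps_prod_sub (@mpoly_natr_unit _) (fun j _ => Gser_S m j) (@Hser_S m)
          (fun j _ => Gfactor_0 m j) (fun j _ => Hfactor_0 m j) G_0 H_0
          (fun j _ => Gfactor_Hfactor_1 m j)
          (@polyfun_Gfactor m) (@polyfun_Gfactor_sub_Hfactor m) polyfun_coef_Hser
          (e := fun N => (lead_diff N)%:MP)) => // n.
by rewrite -mpolyC_nat -mpolyCM lead_diff_rec mpolyCB.
Qed.

Lemma polyfun_GHser : polyfun (fun j => GHser m j m) m.*2.+3 (lead_diff m.+2)%:MP.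
Proof.
pose t i j := (Gser m j i.+2 - Hser m j i.+2) * one_ax2 m (m - i)%N.
apply: (@polyfun_ext _ (fun j => \sum_(i < m.+1) t i j)) => //.
apply: polyfun_sum_recr => [i lt_im|].
  apply: polyfun_widen (polyfun_mul (polyfun_coef_GHdiff i.+1) (polyfun_const _)) _.
  by rewrite addn0 !ltnS ltn_double.
have := polyfun_mul (polyfun_coef_GHdiff m.+1) (polyfun_const 1).
by rewrite /t subnn one_ax2_0 mulr1 addn0.
Qed.

End Proposition.

Unset Implicit Arguments.

Theorem proposition4p1 (m : nat) (S : nat -> {mpoly rat[m]}) :
  (forall j : nat, (0 < j)%N ->
     GHser m j m =
       ((2 * j - 1)%N)%:R *
         ('X_(@ord_max m)
          + \sum_(k < m.+2) mwiden (S k) * ((j * (j - 1))%N)%:R ^+ k)) ->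
  S m.+1 = ((-1) ^+ m / (3 * 2 ^+ m.+1 * (m`!)%:R) : rat)%:MP.
Proof.
move=> GH_expansion.
have lead_eq := polyfun_uniq (@mpoly_natr_unit _) (polyfun_GHser m)
  (polyfun_ext (fun j j_gt0 => esym (GH_expansion j j_gt0))
               (polyfun_uv_expansion m 'X_(@ord_max m) (fun k => mwiden (S k)))).
apply: inj_mwiden; apply: (mulrI (mpoly_natr_unit _ 1)).
rewrite mwidenC -lead_eq -mpolyC_nat -mpolyCM; congr mpolyC.
have fact_neq0 : (m`!%:R : rat) != 0 by rewrite pnatr_eq0 -lt0n fact_gt0.
by rewrite /lead_diff /lead_prod exprS; field; rewrite fact_neq0 expf_neq0.
Qed.
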